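(* Every $2$-connected finitely separable graph is countable.
   Context: Two vertices of a graph $G$ are finitely separable if some finite set of edges of $G$ separates them in $G$. A graph is finitely separable if every pair of its vertices is finitely separable. *)

From Stdlib Require Import List Relations Relation_Operators.
Import ListNotations.

Record graph (V : Type) : Type := Graph {
  adj : V -> V -> Prop;
  adj_sym : forall x y, adj x y -> adj y x;
  adj_irrefl : forall x, ~ adj x x
}.
Arguments adj {V} g x y.

Definition joined {V : Type} (r : V -> V -> Prop) (u v : V) : Prop :=
  clos_refl_trans V r u v.

Definition del_vertices {V : Type} (G : graph V) (X : V -> Prop) : V -> V -> Prop :=
  fun x y => adj G x y /\ ~ X x /\ ~ X y.

Definition connected {V : Type} (G : graph V) : Prop :=
  (exists v : V, True) /\ forall u v : V, joined (adj G) u v.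

Definition connected_minus {V : Type} (G : graph V) (X : V -> Prop) : Prop :=
  (exists v : V, ~ X v) /\
  forall u v : V, ~ X u -> ~ X v -> joined (del_vertices G X) u v.

(* 2-connected (Diestel): more than 2 vertices, and G - X connected for
   every vertex set X with |X| < 2 (i.e. X empty or a single vertex). *)
Definition two_connected {V : Type} (G : graph V) : Prop :=
  (exists a b c : V, a <> b /\ a <> c /\ b <> c) /\
  connected_minus G (fun _ => False) /\
  forall x : V, connected_minus G (fun y => y = x).

(* A finite set F of edges, given as a list of vertex pairs each of which
   is an edge; the pair (a,b) represents the edge {a,b}. *)
Definition edge_list {V : Type} (G : graph V) (F : list (V * V)) : Prop :=
  forall a b, In (a, b) F -> adj G a b.

Definition del_edges {V : Type} (G : graph V) (F : list (V * V)) : V -> V -> Prop :=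
  fun x y => adj G x y /\ ~ In (x, y) F /\ ~ In (y, x) F.

Definition separates {V : Type} (G : graph V) (F : list (V * V)) (u v : V) : Prop :=
  ~ joined (del_edges G F) u v.

Definition finitely_separable_pair {V : Type} (G : graph V) (u v : V) : Prop :=
  exists F : list (V * V), edge_list G F /\ separates G F u v.

Definition finitely_separable {V : Type} (G : graph V) : Prop :=
  forall u v : V, u <> v -> finitely_separable_pair G u v.

Definition countable (V : Type) : Prop :=
  exists f : V -> nat, forall x y, f x = f y -> x = y.

From Stdlib Require Import List Relations Cantor Classical ClassicalEpsilon.
Import ListNotations.

(* Fix a vertex v and a vertex x of G - v, and for every u <> v a finite edge
   set F_u separating u from v.  Let A be the closure of {x} under
   u |-> (endpoints of F_u); it is countable.  Walking from x in G - v, one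
   keeps a vertex a of A to which the current vertex is joined in G - F_a:
   whenever the next edge lies in F_a, its far end is in A and becomes the new
   a.  At a neighbour t of v, the edge tv must lie in F_a (otherwise a is
   joined to v in G - F_a), so t is in A.  Hence every vertex has countably
   many neighbours, and a connected graph with this property is countable. *)

Section Generated.

Variable V : Type.
Variable step : V -> nat -> V.

Inductive generated (r : V) : V -> Prop :=
  | generated_root : generated r r
  | generated_step y i : generated r y -> generated r (step y i).

Definition pair_enum (e : nat -> nat -> V) (n : nat) : V :=
  e (fst (Cantor.of_nat n)) (snd (Cantor.of_nat n)).

Lemma pair_enumE (e : nat -> nat -> V) m n :
  pair_enum e (Cantor.to_nat (m, n)) = e m n.
Proof. unfold pair_enum. now rewrite Cantor.cancel_of_to. Qed.

Fixpoint layer (r : V) (k : nat) : nat -> V :=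
  match k with
  | 0 => fun _ => r
  | S k => pair_enum (fun n i => step (layer r k n) i)
  end.

Lemma generated_enumerable (r : V) :
  exists e : nat -> V, forall y, generated r y -> exists n, e n = y.
Proof.
  exists (pair_enum (layer r)).
  intros y Hy.
  assert (Hlayer : exists k n, layer r k n = y).
  { induction Hy as [|y i _ [k [n Hn]]].
    - now exists 0, 0.
    - exists (S k), (Cantor.to_nat (n, i)).
      cbn [layer]. now rewrite pair_enumE, Hn. }
  destruct Hlayer as [k [n Hn]].
  exists (Cantor.to_nat (k, n)). now rewrite pair_enumE.
Qed.

Lemma countable_of_generated (r : V) :
  (forall y, generated r y) -> countable V.
Proof.
  intros Hall.
  destruct (generated_enumerable r) as [e He].
  destruct (choice (fun y n => e n = y) (fun y => He y (Hall y))) as [f Hf].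
  exists f. intros y z Hyz. now rewrite <- (Hf y), <- (Hf z), Hyz.
Qed.

End Generated.

Arguments generated {V} step r _.

Definition endpoints {V : Type} (F : list (V * V)) : list V :=
  map fst F ++ map snd F.

Lemma endpoints_fst {V : Type} (F : list (V * V)) a b :
  In (a, b) F -> In a (endpoints F).
Proof. intros H. apply in_or_app. left. exact (in_map fst F (a, b) H). Qed.

Lemma endpoints_snd {V : Type} (F : list (V * V)) a b :
  In (a, b) F -> In b (endpoints F).
Proof. intros H. apply in_or_app. right. exact (in_map snd F (a, b) H). Qed.

Lemma joined_del_edges_step {V : Type} (G : graph V) (F : list (V * V)) a y z :
  joined (del_edges G F) a y -> adj G y z ->
  joined (del_edges G F) a z \/ (In y (endpoints F) /\ In z (endpoints F)).
Proof.
  intros Hay Hyz.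
  destruct (classic (In (y, z) F)) as [Hin|Hyz_out].
  { right. split; [exact (endpoints_fst F y z Hin) | exact (endpoints_snd F y z Hin)]. }
  destruct (classic (In (z, y) F)) as [Hin|Hzy_out].
  { right. split; [exact (endpoints_snd F z y Hin) | exact (endpoints_fst F z y Hin)]. }
  left. apply rt_trans with y; [exact Hay|]. apply rt_step. now split.
Qed.

Lemma neighbours_enumerable {V : Type} (G : graph V) (v : V) :
  connected_minus G (fun y => y = v) ->
  (forall u, u <> v -> finitely_separable_pair G u v) ->
  exists e : nat -> V, forall t, adj G t v -> exists n, e n = t.
Proof.
  intros [[x Hxv] Hconn] Hsep.
  assert (HF : forall u, exists F, u <> v -> separates G F u v).
  { intros u. destruct (classic (u = v)) as [->|Huv].
    - exists []. intros Hvv. contradiction.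
    - destruct (Hsep u Huv) as [F [_ HF]]. now exists F. }
  destruct (choice _ HF) as [F HFsep]; clear HF.
  set (step := fun a i => nth i (endpoints (F a)) x).
  assert (Hclosed : forall a b, generated step x a -> In b (endpoints (F a)) ->
                      generated step x b).
  { intros a b Ha Hb. destruct (In_nth _ _ x Hb) as [i [_ Hi]].
    rewrite <- Hi. exact (generated_step _ step x a i Ha). }
  assert (Hwalk : forall w, joined (del_vertices G (fun y => y = v)) x w ->
            exists a, generated step x a /\ a <> v /\ joined (del_edges G (F a)) a w).
  { intros w Hw. apply clos_rt_rtn1 in Hw.
    induction Hw as [|y z [Hyz [_ Hzv]] _ [a [Ha [Hav Hay]]]].
    - exists x. repeat split; [constructor | exact Hxv | apply rt_refl].
    - destruct (joined_del_edges_step G (F a) a y z Hay Hyz) as [Haz|Hz].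
      + now exists a.
      + exists z. repeat split; [exact (Hclosed a z Ha (proj2 Hz)) | exact Hzv | apply rt_refl]. }
  destruct (generated_enumerable V step x) as [e He].
  exists e. intros t Htv.
  assert (Htv_neq : t <> v) by (intros ->; exact (adj_irrefl _ G v Htv)).
  destruct (Hwalk t (Hconn x t Hxv Htv_neq)) as [a [Ha [Hav Hat]]].
  apply He.
  destruct (joined_del_edges_step G (F a) a t v Hat Htv) as [Hjoin|[Ht _]].
  - exfalso. exact (HFsep a Hav Hjoin).
  - exact (Hclosed a t Ha Ht).
Qed.

Theorem mainTheorem4 (V : Type) (G : graph V) :
  two_connected G -> finitely_separable G -> countable V.
Proof.
  intros [[r _] [[_ Hconn] Hconn_minus]] Hfs.
  assert (Hen : forall v, exists e : nat -> V, forall t, adj G t v -> exists n, e n = t).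
  { intros v. apply neighbours_enumerable; [apply Hconn_minus|].
    intros u Huv. exact (Hfs u v Huv). }
  destruct (choice _ Hen) as [en Hen_spec].
  apply (countable_of_generated V en r).
  intros y. specialize (Hconn r y (fun H => H) (fun H => H)).
  apply clos_rt_rtn1 in Hconn.
  induction Hconn as [|y z [Hyz _] _ IH]; [constructor|].
  destruct (Hen_spec y z (adj_sym _ G y z Hyz)) as [i <-].
  now apply generated_step.
Qed.
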